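(* Let $G\in\mathcal{RG}^{{\underline{\kappa}},*}_{g,n}$ be a non-bipartite ribbon graph. Then: (1) $\operatorname{vp}_G:\mathbb R^{E(G)}\to\mathbb R^n$ is surjective; (2) for every $\underline b\in\mathbb R^n$, $\operatorname{vp}_G^{-1}(\underline b)$ is an affine subspace of $\mathbb R^{E(G)}$ of dimension $|E(G)|-|V(G)|$; (3) regarding the coordinates $w(e)$ as affine functions on $\operatorname{vp}_G^{-1}(\underline b)$, for every $e\in S(G)$ the function $w(e)$ is constant equal to $f_e(\underline b)$, and for every $e\in E(G)\setminus S(G)$ it is non-constant; (4) if $\underline b\in\mathbb Z^n$ and $b_1+\dots+b_n\equiv0\pmod 2$, then $\operatorname{vp}_G^{-1}(\underline b)\cap\mathbb Z^{E(G)}$ is a lattice in $\operatorname{vp}_G^{-1}(\underline b)$; otherwise it is empty.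
   Context: Ribbon graph: finite graph (loops, multiple edges allowed) with cyclic order of half-edges at each vertex, determining faces and genus. For ${\underline{\kappa}}$ a partition with odd parts, $\mathcal{RG}^{{\underline{\kappa}},*}_{g,n}$: isomorphism classes of connected ribbon graphs of genus $g$ with $n$ labeled vertices and face degrees ${\underline{\kappa}}$. Weight function $w:E(G)\to\mathbb R$; $\operatorname{vp}_G(w)_v=\sum_e a_{ve}w(e)$, $a_{ve}=2$ for a loop at $v$, $1$ for a non-loop edge at $v$, $0$ otherwise. For non-bipartite $G$, $e$ is static if some component of $G-e$ is bipartite; $S(G)$ the static edges. For $e\in S(G)$, $f_e$ is the linear function on $\mathbb R^n$: if $e$ is a bridge, with $I,J$ the labels of the two color classes of the bipartite component of $G-e$, $e$ incident to the class $I$, $f_e(\underline b)=\sum_{I}b_i-\sum_Jb_j$; if $e$ is not a bridge ($G-e$ connected bipartite, both endpoints of $e$ in class $I$), $f_e(\underline b)=\tfrac12(\sum_Ib_i-\sum_Jb_j)$. *)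

From HB Require Import structures.
From mathcomp Require Import all_boot all_order all_algebra all_fingroup.
From mathcomp Require Import reals.
Set Implicit Arguments. Unset Strict Implicit. Unset Printing Implicit Defensive.
Import Order.TTheory GRing.Theory Num.Theory.
Local Open Scope ring_scope.

(* A ribbon graph with n labeled vertices, in the standard combinatorial
   (permutation) model: a finite set of half-edges, a permutation [rot]
   (the cyclic order of half-edges around each vertex) and a fixed-point-free
   involution [inv] (pairing half-edges into edges).  The vertices are the
   cycles of [rot]; they are labeled bijectively by 'I_n via [vlab]. *)

Record ribbon_graph (n : nat) := RibbonGraph {
  half : finType;
  rot : {perm half};
  inv : {perm half};
  vlab : half -> 'I_n;
  invK_ax : forall h, inv (inv h) = h;
  inv_fpf_ax : forall h, inv h != h;
  vlab_orbit_ax : forall h h', (vlab h == vlab h') = (h' \in porbit rot h);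
  vlab_surj_ax : forall v : 'I_n, exists h, vlab h = v
}.

Arguments vlab [n] r _.

Section RG.
Variables (n : nat) (G : ribbon_graph n).

Definition edge_set : {set {set half G}} := [set [set h; inv G h] | h : half G].
Definition edge := {e : {set half G} | e \in edge_set}.

(* Faces: cycles of the face permutation (first inv, then rot). *)
Definition face_perm : {perm half G} := (inv G * rot G)%g.
Definition faces : {set {set half G}} := porbits face_perm.
Definition face_degrees : seq nat := [seq #|f| | f : {set half G} in faces].

Definition adj : rel 'I_n :=
  fun u v => [exists h : half G, (vlab G h == u) && (vlab G (inv G h) == v)].
Definition connected_rg : bool := [forall u, forall v, connect adj u v].

Definition has_genus (g : nat) : Prop :=
  (2 - 2 * (g : int) = (n : int) - (#|edge_set| : int) + (#|faces| : int))%R.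

Definition in_RG (kappa : seq nat) (g : nat) : Prop :=
  [/\ connected_rg, has_genus g & perm_eq face_degrees kappa].

(* a_{ve}: number of half-edges of e attached at v (2 for a loop at v,
   1 for a non-loop edge at v, 0 otherwise). *)
Definition inc (v : 'I_n) (e : edge) : nat := #|[set h in val e | vlab G h == v]|.

Definition bipartite : bool :=
  [exists c : {ffun 'I_n -> bool},
     [forall h : half G, c (vlab G h) != c (vlab G (inv G h))]].

Definition adj_minus (e : edge) : rel 'I_n :=
  fun u v => [exists h : half G,
     [&& h \notin val e, vlab G h == u & vlab G (inv G h) == v]].
Definition comp_minus (e : edge) (u : 'I_n) : {set 'I_n} :=
  [set v | connect (adj_minus e) u v].
Definition is_bridge (e : edge) : bool :=
  ~~ [forall u, forall v, connect (adj_minus e) u v].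

Definition proper_on (e : edge) (C : {set 'I_n}) (c : {ffun 'I_n -> bool}) : bool :=
  [forall h : half G, ((h \notin val e) && (vlab G h \in C)) ==>
                      (c (vlab G h) != c (vlab G (inv G h)))].

Definition static (e : edge) : bool :=
  ~~ bipartite &&
  [exists u, exists c : {ffun 'I_n -> bool}, proper_on e (comp_minus e u) c].

(* Data defining f_e: a bipartite component C = comp_minus e u of G - e with
   a proper colouring c; I = {v in C | c v}, J = {v in C | ~~ c v}, and e is
   incident to the class I. *)
Definition fe_data (e : edge) (p : 'I_n * {ffun 'I_n -> bool}) : bool :=
  proper_on e (comp_minus e p.1) p.2 &&
  [exists h : half G, [&& h \in val e, vlab G h \in comp_minus e p.1 & p.2 (vlab G h)]].

Variable R : realType.

Definition vp (w : edge -> R) (v : 'I_n) : R := \sum_(e : edge) (inc v e)%:R * w e.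

Definition f_e (e : edge) (b : 'I_n -> R) : R :=
  match [pick p | fe_data e p] with
  | Some p =>
      let C := comp_minus e p.1 in
      (if is_bridge e then 1 else 2^-1) *
      ((\sum_(i in C | p.2 i) b i) - (\sum_(j in C | ~~ p.2 j) b j))
  | None => 0
  end.

Definition in_fiber (b : 'I_n -> R) (w : edge -> R) : Prop :=
  forall v, vp w v = b v.

Definition lin_indep (d : nat) (u : 'I_d -> edge -> R) : Prop :=
  forall lam : 'I_d -> R, (forall e, \sum_k lam k * u k e = 0) -> forall k, lam k = 0.

Definition aff_param (d : nat) (w0 : edge -> R) (u : 'I_d -> edge -> R)
  (lam : 'I_d -> R) (e : edge) : R := w0 e + \sum_k lam k * u k e.

Definition fiber_affine_dim (b : 'I_n -> R) (d : nat) (w0 : edge -> R)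
  (u : 'I_d -> edge -> R) : Prop :=
  [/\ (d + n)%N = #|edge_set|, lin_indep u &
      forall w, in_fiber b w <-> exists lam, forall e, w e = aff_param w0 u lam e].

Definition integral_w (w : edge -> R) : Prop := forall e, w e \is a Num.int.

End RG.

From Pilot Require Import Defs.
From HB Require Import structures.
From mathcomp Require Import all_boot all_order all_algebra all_fingroup.
From mathcomp Require Import reals.
From mathcomp Require Import boolp zify ring.
Set Implicit Arguments. Unset Strict Implicit. Unset Printing Implicit Defensive.
Import Order.TTheory GRing.Theory Num.Theory.
Local Open Scope ring_scope.

Lemma connect_ind (T : finType) (e : rel T) (x : T) (Q : T -> Prop) :
  Q x -> (forall y z, connect e x y -> Q y -> e y z -> Q z) ->
  forall y, connect e x y -> Q y.
Proof.
move=> Qx Qstep y /connectP [p]; elim/last_ind: p y => [|p z IHp] y /=.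
  by move=> _ ->.
rewrite rcons_path last_rcons => /andP [xp ez] ->.
apply: (Qstep (last x p)) => //; last exact: IHp.
by apply/connectP; exists p.
Qed.

Definition evec n (x : 'I_n) (i : 'I_n) : int := (x == i)%:Z.

Lemma sum_evec_l n (t : 'I_n -> int) v : \sum_x t x * evec x v = t v.
Proof.
rewrite (bigD1 v) //= /evec eqxx mulr1 big1 ?addr0 // => x /negbTE ->.
by rewrite mulr0.
Qed.

Lemma sum_evec_r n (x : 'I_n) : \sum_v evec x v = 1.
Proof.
rewrite (bigD1 x) //= /evec eqxx big1 ?addr0 // => v nv.
by rewrite eq_sym (negbTE nv).
Qed.

Section EdgeLattice.

Variables (n : nat) (T : finType) (src dst : T -> 'I_n) (P : pred T).
Variable S : ('I_n -> int) -> Prop.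
Hypothesis S0 : S (fun _ => 0).
Hypothesis SB : forall t1 t2 t, S t1 -> S t2 -> (forall i, t i = t1 i - t2 i) -> S t.
Hypothesis S_edge : forall h, P h -> S (fun i => evec (src h) i + evec (dst h) i).

Definition adj_on : rel 'I_n :=
  fun u v => [exists h, [&& P h, src h == u & dst h == v]].

Lemma SD t1 t2 t : S t1 -> S t2 -> (forall i, t i = t1 i + t2 i) -> S t.
Proof.
move=> S1 S2 Et; apply: (SB S1 (t2 := fun i => 0 - t2 i)); first exact: SB S0 S2 _.
by move=> i; rewrite Et; lia.
Qed.

(* Along a walk from r, e_v - e_r and e_v + e_r alternate in S. *)
Lemma span_parity r : forall x, connect adj_on r x ->
  S (fun i => evec x i - evec r i) \/ S (fun i => evec x i + evec r i).
Proof.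
apply: connect_ind; first by left; apply: (SB S0 S0) => i; lia.
move=> y z _ [Sy|Sy] /existsP [h /and3P [Ph /eqP hy /eqP hz]].
  by right; apply: (SB (S_edge Ph) Sy) => i; rewrite -hy -hz; lia.
by left; apply: (SB (S_edge Ph) Sy) => i; rewrite -hy -hz; lia.
Qed.

Definition odd_reachable r := forall c : 'I_n -> bool,
  exists2 h, P h & connect adj_on r (src h) /\ c (src h) = c (dst h).

Variable r : 'I_n.
Hypothesis odd_r : odd_reachable r.

(* Colour each reachable vertex by which of e_v -+ e_r lies in S: a
   monochromatic edge then forces both signs at one of its ends. *)
Lemma span_double : S (fun i => 2 * evec r i).
Proof.
pose Odd v := S (fun i => evec v i + evec r i).
pose Even v := S (fun i => evec v i - evec r i).
have [both|] := pselect (exists v, Even v /\ Odd v).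
  by case: both => v [Ev Ov]; apply: (SB Ov Ev) => i; lia.
move=> not_both; have [h Ph [ry ceq]] := odd_r (fun v => `[< Odd v >]).
have rz : connect adj_on r (dst h).
  apply: connect_trans ry (connect1 _); apply/existsP; exists h.
  by rewrite Ph !eqxx.
have Even_of v : connect adj_on r v -> ~ Odd v -> Even v.
  by move=> /span_parity [].
move: ceq; case: (asboolP (Odd (src h))) => Oy; case: (asboolP (Odd (dst h))) => Oz // _.
  have Oyz : S (fun i => evec (src h) i + evec r i + (evec (dst h) i + evec r i)).
    exact: SD Oy Oz _.
  by apply: (SB Oyz (S_edge Ph)) => i; lia.
have Eyz : S (fun i => evec (src h) i - evec r i + (evec (dst h) i - evec r i)).
  exact: SD (Even_of _ ry Oy) (Even_of _ rz Oz) _.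
by apply: (SB (S_edge Ph) Eyz) => i; lia.
Qed.

Lemma span_pair x : connect adj_on r x -> S (fun i => evec x i + evec r i).
Proof.
case/span_parity => // Ex.
by apply: (SD Ex span_double) => i; lia.
Qed.

End EdgeLattice.

Definition rdiag_mx (K : pzSemiRingType) m p (s : nat -> K) : 'M[K]_(m, p) :=
  \matrix_(i, j) (s i *+ (i == j :> nat)).

Lemma rdiag_mxM (K : pzSemiRingType) m d p (s : nat -> K) (Z : 'M[K]_(m + d, p)) i k :
  (rdiag_mx m (m + d) s *m Z) i k = s i * Z (lshift d i) k.
Proof.
rewrite !mxE (bigD1 (lshift d i)) //= mxE eqxx mulr1n big1 ?addr0 // => j ji.
rewrite mxE; case: eqP => [ij|]; last by rewrite mulr0n mul0r.
by case/eqP: ji; apply: val_inj.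
Qed.

Lemma map_rdiag_mx (K : pzRingType) m p (s : nat -> int) :
  map_mx (intr : int -> K) (rdiag_mx m p s) = rdiag_mx m p (fun i => (s i)%:~R).
Proof. by apply/matrixP => i j; rewrite !mxE rmorphMn. Qed.

Lemma leq_row_col_rinv (F : fieldType) m p (A : 'M[F]_(m, p)) (X : 'M_(p, m)) :
  A *m X = 1%:M -> (m <= p)%N.
Proof.
move=> AX; have := mxrankM_maxl A X; rewrite AX mxrank1 => rkA.
exact: leq_trans rkA (rank_leq_col A).
Qed.

Lemma rdiag_kernel (K : idomainType) m d (L Linv : 'M[K]_m) (s : nat -> K)
    (A : 'M[K]_(m, m + d)) (N Ninv : 'M[K]_(m + d)) :
  A = L *m rdiag_mx m (m + d) s *m N -> Linv *m L = 1%:M ->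
  Ninv *m N = 1%:M -> N *m Ninv = 1%:M -> (forall i : 'I_m, s i != 0) ->
  forall x : 'cV[K]_(m + d),
    A *m x = 0 <-> exists lam : 'cV_d, x = Ninv *m col_mx 0 1%:M *m lam.
Proof.
move=> -> LinvL NinvN NNinv s_neq0 x; split=> [Ax|[lam ->]].
  have DNx : rdiag_mx m (m + d) s *m (N *m x) = 0.
    have : Linv *m (L *m rdiag_mx m (m + d) s *m N *m x) = 0 by rewrite Ax mulmx0.
    by rewrite -!mulmxA (mulmxA Linv) LinvL mul1mx.
  have u0 : usubmx (N *m x) = 0.
    apply/matrixP => i k; rewrite !mxE.
    move/matrixP: DNx => /(_ i k) /eqP; rewrite rdiag_mxM !mxE.
    by rewrite mulf_eq0 (negbTE (s_neq0 i)) => /eqP.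
  exists (dsubmx (N *m x)).
  by rewrite -mulmxA mul_col_mx mul0mx mul1mx -u0 vsubmxK mulmxA NinvN mul1mx.
rewrite -!mulmxA (mulmxA N) NNinv mul1mx mul_col_mx mul0mx mul1mx.
suff -> : rdiag_mx m (m + d) s *m col_mx 0 lam = 0 by rewrite mulmx0.
by apply/matrixP => i k; rewrite rdiag_mxM col_mxEu !mxE mulr0.
Qed.

Lemma rdiag_neq0_of_rinv m d (A : 'M[int]_(m, m + d)) (X : 'M_(m + d, m))
    (L : 'M_m) (N : 'M_(m + d)) (s : nat -> int) :
  A *m X = 2%:M -> L \in unitmx -> A = L *m rdiag_mx m (m + d) s *m N ->
  forall i : 'I_m, s i != 0.
Proof.
move=> AX Lu eA i; apply/eqP => si0.
have DNX : rdiag_mx m (m + d) s *m (N *m X) = 2 *: invmx L.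
  by rewrite -mul_mx_scalar -AX eA -!mulmxA mulKmx.
have Linv_i0 k : invmx L i k = 0.
  move/matrixP: DNX => /(_ i k); rewrite rdiag_mxM si0 mul0r !mxE => /esym/eqP.
  by rewrite mulf_eq0 => /eqP.
move/matrixP: (mulVmx Lu) => /(_ i i); rewrite !mxE eqxx /= big1 // => k _.
by rewrite Linv_i0 mul0r.
Qed.

(* The Smith normal form of an integer matrix A with A X = 2 gives one basis U
   for both the rational kernel of A and its integral kernel. *)
Lemma int_kernel_basis (K : numDomainType) m d (A : 'M[int]_(m, m + d)) (X : 'M_(m + d, m)) :
  A *m X = 2%:M ->
  exists U : 'M[int]_(m + d, d),
  [/\ forall lam : 'cV[K]_d, map_mx intr U *m lam = 0 -> lam = 0,
      forall x : 'cV[K]_(m + d),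
        map_mx intr A *m x = 0 <-> exists lam, x = map_mx intr U *m lam
    & forall x : 'cV[int]_(m + d), A *m x = 0 <-> exists lam, x = U *m lam].
Proof.
move=> AX; have [L Lu [N Nu [s _ eA]]] := int_Smith_normal_form A.
have s_neq0 := rdiag_neq0_of_rinv AX Lu eA.
have map1 (M1 M2 : 'M[int]_(m + d)) : M1 *m M2 = 1%:M ->
    map_mx (intr : int -> K) M1 *m map_mx intr M2 = 1%:M.
  by move=> M12; rewrite -map_mxM M12 map_mx1.
have mapU : map_mx (intr : int -> K) (invmx N *m col_mx 0 1%:M) =
    map_mx intr (invmx N) *m col_mx 0 1%:M.
  by rewrite map_mxM map_col_mx map_mx0 map_mx1.
exists (invmx N *m col_mx 0 1%:M); split.
- move=> lam; rewrite mapU -mulmxA => /(congr1 (mulmx (map_mx intr N))).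
  rewrite mulmx0 mulmxA map1 ?mulmxV // mul1mx mul_col_mx mul0mx mul1mx.
  by move/eqP; rewrite -col_mx0 => /eqP /eq_col_mx [].
- move=> x; rewrite mapU.
  apply: (rdiag_kernel (L := map_mx intr L) (Linv := map_mx intr (invmx L))
           (s := fun i => (s`_i)%:~R)).
  + by rewrite eA !map_mxM map_rdiag_mx.
  + by rewrite -map_mxM mulVmx // map_mx1.
  + exact/map1/mulVmx.
  + exact/map1/mulmxV.
  + by move=> i; rewrite intr_eq0 s_neq0.
- by apply: (rdiag_kernel (Linv := invmx L) eA); rewrite ?mulVmx ?mulmxV.
Qed.

Section RibbonGraph.

Variables (n : nat) (G : ribbon_graph n).
Local Notation half := (Defs.half G).
Local Notation vl := (vlab G).
Local Notation iv := (Defs.inv G).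

Lemma half_invK : involutive iv. Proof. exact: invK_ax. Qed.

Lemma edge_set_pair (h : half) : [set h; iv h] \in edge_set G.
Proof. by apply/imsetP; exists h. Qed.

Definition edge_of (h : half) : edge G := exist _ [set h; iv h] (edge_set_pair h).

Lemma edge_ofP (e : edge G) : exists h, e = edge_of h.
Proof. by case: e => s /[dup] /imsetP [h _ ->] es; exists h; apply: val_inj. Qed.

Lemma edge_of_half (e : edge G) h : h \in val e -> e = edge_of h.
Proof.
have [h0 ->] := edge_ofP e; rewrite !inE => /orP [] /eqP ->; apply: val_inj => //=.
by rewrite half_invK setUC.
Qed.

Lemma inc_edge_of v h : inc v (edge_of h) = ((vl h == v) + (vl (iv h) == v))%N.
Proof.
rewrite /inc /= -sum1dep_card big_mkcondr /= big_setU1 ?big_set1 /=; last first.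
  by rewrite inE eq_sym inv_fpf_ax.
by case: (vl h == v); case: (vl (iv h) == v).
Qed.

Lemma sum_inc (e : edge G) : \sum_v (inc v e)%:Z = 2.
Proof.
have [h ->] := edge_ofP e; under eq_bigr do rewrite inc_edge_of PoszD.
by rewrite big_split /= (sum_evec_r (vl h)) (sum_evec_r (vl (iv h))).
Qed.

Definition vpr (K : comPzRingType) (w : edge G -> K) (v : 'I_n) : K :=
  \sum_e (inc v e)%:R * w e.

Lemma vpE (R : realType) (w : edge G -> R) v : vp w v = vpr w v. Proof. by []. Qed.

Section VertexSum.
Variable K : comPzRingType.
Implicit Types w : edge G -> K.

Lemma eq_vpr w1 w2 v : w1 =1 w2 -> vpr w1 v = vpr w2 v.
Proof. by move=> Ew; apply: eq_bigr => e _; rewrite Ew. Qed.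

Lemma vprD w1 w2 v : vpr (fun e => w1 e + w2 e) v = vpr w1 v + vpr w2 v.
Proof. by rewrite /vpr -big_split; apply: eq_bigr => e _; rewrite mulrDr. Qed.

Lemma vprB w1 w2 v : vpr (fun e => w1 e - w2 e) v = vpr w1 v - vpr w2 v.
Proof. by rewrite /vpr -sumrB; apply: eq_bigr => e _; rewrite mulrBr. Qed.

Lemma vpr_sum (I : finType) (a : I -> K) (W : I -> edge G -> K) v :
  vpr (fun e => \sum_k a k * W k e) v = \sum_k a k * vpr (W k) v.
Proof.
rewrite /vpr; under eq_bigr do rewrite mulr_sumr; rewrite exchange_big /=.
by apply: eq_bigr => k _; rewrite mulr_sumr; apply: eq_bigr => e _; ring.
Qed.

Lemma vprZ a w v : vpr (fun e => a * w e) v = a * vpr w v.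
Proof. by rewrite /vpr mulr_sumr; apply: eq_bigr => e _; rewrite mulrCA. Qed.

Lemma vpr_edge_of h v :
  vpr (fun e => (e == edge_of h)%:R : K) v = ((vl h == v) + (vl (iv h) == v))%:R.
Proof.
rewrite /vpr (bigD1 (edge_of h)) //= eqxx mulr1 big1 ?addr0 ?inc_edge_of //.
by move=> e /negbTE ->; rewrite mulr0.
Qed.

Lemma vpr_intr (w : edge G -> int) v : vpr (fun e => (w e)%:~R : K) v = (vpr w v)%:~R.
Proof. by rewrite /vpr rmorph_sum; apply: eq_bigr => e _; rewrite rmorphM /= rmorph_nat. Qed.

End VertexSum.

Lemma sum_vpr (w : edge G -> int) : \sum_v vpr w v = 2 * \sum_e w e.
Proof.
rewrite /vpr exchange_big mulr_sumr; apply: eq_bigr => e _.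
by rewrite -mulr_suml; under eq_bigr do rewrite natz; rewrite sum_inc.
Qed.

Definition vp_span (Q : pred (edge G)) (t : 'I_n -> int) : Prop :=
  exists2 w : edge G -> int, (forall e, ~~ Q e -> w e = 0) & forall v, vpr w v = t v.

Lemma vp_span0 Q : vp_span Q (fun _ => 0).
Proof. by exists (fun _ => 0) => // v; rewrite /vpr big1 // => e _; rewrite mulr0. Qed.

Lemma vp_spanB Q t1 t2 t :
  vp_span Q t1 -> vp_span Q t2 -> (forall i, t i = t1 i - t2 i) -> vp_span Q t.
Proof.
move=> [w1 Q1 E1] [w2 Q2 E2] Et; exists (fun e => w1 e - w2 e).
  by move=> e Qe; rewrite Q1 // Q2 // subr0.
by move=> v; rewrite vprB E1 E2 Et.
Qed.

Lemma vp_span_edge (Q : pred (edge G)) h : Q (edge_of h) ->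
  vp_span Q (fun i => evec (vl h) i + evec (vl (iv h)) i).
Proof.
move=> Qh; exists (fun e => (e == edge_of h)%:R).
  by move=> e; apply: contraNeq; rewrite pnatr_eq0 eqb0 negbK => /eqP ->.
by move=> v; rewrite vpr_edge_of natrD !natz.
Qed.

Section IncidenceMatrix.
Variables (k : nat) (f : 'I_k -> edge G) (f' : edge G -> 'I_k).
Hypotheses (fK : cancel f f') (f'K : cancel f' f).

Definition inc_mx (K : pzRingType) : 'M[K]_(n, k) := \matrix_(v, j) (inc v (f j))%:R.

Definition fcol (K : Type) (z : edge G -> K) : 'cV[K]_k := \col_j z (f j).

Lemma map_inc_mx (K : pzRingType) : map_mx intr (inc_mx int) = inc_mx K.
Proof. by apply/matrixP => v j; rewrite !mxE rmorph_nat. Qed.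

Lemma inc_mx_fcol (K : comPzRingType) (w : edge G -> K) :
  inc_mx K *m fcol w = \col_v vpr w v.
Proof.
apply/matrixP => v i; rewrite !mxE /vpr (reindex f) /=; last by exists f' => e _.
by apply: eq_bigr => j _; rewrite !mxE.
Qed.

Lemma inc_mx_fcol_eq0 (K : comPzRingType) (w : edge G -> K) :
  inc_mx K *m fcol w = 0 <-> forall v, vpr w v = 0.
Proof.
rewrite inc_mx_fcol; split=> [/matrixP w0 v|w0].
  by have := w0 v 0; rewrite !mxE.
by apply/matrixP => v i; rewrite !mxE w0.
Qed.

Lemma fcolP (K : Type) (z : edge G -> K) (y : 'cV[K]_k) :
  fcol z = y <-> forall e, z e = y (f' e) 0.
Proof.
split=> [<- e|zy]; first by rewrite mxE f'K.
by apply/matrixP => j i; rewrite ord1 mxE zy fK.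
Qed.

End IncidenceMatrix.

Lemma mulmx_colE (K : comPzRingType) p q (M : 'M[K]_(p, q)) (y : 'cV_q) j :
  (M *m y) j 0 = \sum_i y i 0 * M j i.
Proof. by rewrite mxE; apply: eq_bigr => i _; rewrite mulrC. Qed.

Lemma integral_wP (R : realType) (z : edge G -> R) :
  integral_w z -> exists zz : edge G -> int, forall e, z e = (zz e)%:~R.
Proof. by move=> zint; apply: (fin_all_exists (P := fun e y => z e = y%:~R)) => e; apply/intrP. Qed.

Lemma int_fiber_parity (R : realType) (b : 'I_n -> R) (w : edge G -> R) :
  in_fiber b w -> integral_w w ->
  exists bz : 'I_n -> int, (forall v, b v = (bz v)%:~R) /\ (2 %| \sum_v bz v)%Z.
Proof.
move=> wb /integral_wP [wz wzE]; exists (vpr wz); split.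
  by move=> v; rewrite -wb vpE (eq_vpr _ wzE) vpr_intr.
by rewrite sum_vpr; apply/dvdzP; exists (\sum_e wz e); rewrite mulrC.
Qed.

Section Fibers.
Variables (R : realType) (b : 'I_n -> R) (w0 : edge G -> R).
Hypothesis w0_fiber : in_fiber b w0.

Lemma in_fiber_kernel w : in_fiber b w <-> forall v, vp (fun e => w e - w0 e) v = 0.
Proof.
split=> [wb v|w0b v]; first by rewrite vpE vprB -!vpE wb w0_fiber subrr.
by apply/eqP; rewrite -w0_fiber -subr_eq0 !vpE -vprB; apply/eqP/w0b.
Qed.

Variables (d : nat) (u : 'I_d -> edge G -> R).

Lemma fiber_param :
  (forall z, (forall v, vp z v = 0) <-> exists lam, forall e, z e = \sum_i lam i * u i e) ->
  forall w, in_fiber b w <-> exists lam, forall e, w e = aff_param w0 u lam e.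
Proof.
move=> kerR w; rewrite in_fiber_kernel kerR.
split=> -[lam wE]; exists lam => e; rewrite /aff_param.
  by rewrite -wE addrC subrK.
by rewrite wE addrAC subrr add0r.
Qed.

Lemma fiber_int_param : integral_w w0 ->
  (forall z, ((forall v, vp z v = 0) /\ integral_w z) <->
     exists m : 'I_d -> int, forall e, z e = \sum_i (m i)%:~R * u i e) ->
  forall w, in_fiber b w /\ integral_w w <->
    exists m : 'I_d -> int, forall e, w e = aff_param w0 u (fun i => (m i)%:~R) e.
Proof.
move=> w0_int kerZ w; rewrite in_fiber_kernel.
have -> : integral_w w <-> integral_w (fun e => w e - w0 e).
  split=> wint e; first by rewrite rpredB.
  by rewrite -(subrK (w0 e) (w e)) rpredD.
rewrite kerZ.
split=> -[m wE]; exists m => e; rewrite /aff_param.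
  by rewrite -wE addrC subrK.
by rewrite wE addrAC subrr add0r.
Qed.

End Fibers.

Section Connected.
Hypotheses (conn : connected_rg G) (nbip : ~~ bipartite G).

Lemma connect_full r x : connect (adj_on vl (fun h => vl (iv h)) predT) r x.
Proof. by move/forallP: conn => /(_ r) /forallP /(_ x). Qed.

Lemma odd_reachable_full r : odd_reachable vl (fun h => vl (iv h)) predT r.
Proof.
move=> c; move: nbip; rewrite negb_exists => /forallP /(_ [ffun i => c i]).
rewrite negb_forall => /existsP [h]; rewrite !ffunE negbK => /eqP ch.
by exists h => //; split; first exact: connect_full.
Qed.

Lemma vp_span_double x : vp_span predT (fun i => 2 * evec x i).
Proof.
exact: (span_double (vp_span0 predT) (@vp_spanB predT) (fun h _ => @vp_span_edge predT h isT)
  (odd_reachable_full x)).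
Qed.

Lemma vpr_double_preimage :
  exists W : 'I_n -> edge G -> int, forall x v, vpr (W x) v = 2 * evec x v.
Proof.
apply: (fin_all_exists (P := fun x w => forall v, vpr w v = 2 * evec x v)) => x.
by have [w _ Ew] := vp_span_double x; exists w.
Qed.

Lemma vpr_even_surj (t : 'I_n -> int) : (2 %| \sum_v t v)%Z ->
  exists w : edge G -> int, forall v, vpr w v = t v.
Proof.
move=> /dvdzP [q sum_t].
case: (pickP (fun _ : 'I_n => true)) => [r _|no_vertex]; last by exists (fun _ => 0) => v; have := no_vertex v.
have [W EW] : exists W : 'I_n -> edge G -> int,
    forall x v, vpr (W x) v = evec x v + evec r v.
  apply: (fin_all_exists (P := fun x w => forall v, vpr w v = evec x v + evec r v)) => x.
  have [w _ Ew] := span_pair (@vp_span0 _) (@vp_spanB _) (fun h _ => @vp_span_edge predT h isT)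
    (odd_reachable_full r) (connect_full r x).
  by exists w.
have [w2 _ Ew2] := vp_span_double r.
exists (fun e => \sum_x t x * W x e - q * w2 e) => v.
rewrite vprB vpr_sum.
rewrite vprZ Ew2.
under eq_bigr do rewrite EW mulrDr.
by rewrite big_split /= sum_evec_l -mulr_suml sum_t; ring.
Qed.

Lemma inc_mx_rinv k (f : 'I_k -> edge G) (f' : edge G -> 'I_k) :
  cancel f f' -> cancel f' f -> exists X, inc_mx f int *m X = 2%:M.
Proof.
move=> fK f'K; have [W EW] := vpr_double_preimage.
exists (\matrix_(j, x) W x (f j)); apply/matrixP => v x.
have := congr1 (fun M : 'cV_n => M v 0) (inc_mx_fcol fK f'K (W x)).
rewrite !mxE EW /evec eq_sym -natz mulr_natr => <-.
by apply: eq_bigr => j _; rewrite !mxE.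
Qed.

Lemma leq_vertex_edge k (f : 'I_k -> edge G) (f' : edge G -> 'I_k) :
  cancel f f' -> cancel f' f -> (n <= k)%N.
Proof.
move=> fK f'K; have [X AX] := inc_mx_rinv fK f'K.
apply: (@leq_row_col_rinv rat _ _ (inc_mx f rat) (2^-1 *: map_mx intr X)).
by rewrite -scalemxAr -map_inc_mx -map_mxM AX map_scalar_mx scale_scalar_mx mulVf.
Qed.

Section Edge.
Variable e : edge G.

Lemma edge_of_notin h : h \notin val e -> edge_of h != e.
Proof. by apply: contraNneq => <-; rewrite !inE eqxx. Qed.

Lemma notin_edge_inv h : h \notin val e -> iv h \notin val e.
Proof. by apply: contra => /edge_of_half ->; rewrite !inE half_invK eqxx orbT. Qed.

Lemma adj_minus_sym : symmetric (adj_minus e).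
Proof.
suff adj_sym x y : adj_minus e x y -> adj_minus e y x by move=> x y; apply/idP/idP; apply: adj_sym.
case/existsP => h /and3P [he hx hy]; apply/existsP; exists (iv h).
by rewrite notin_edge_inv // half_invK hx hy.
Qed.

Lemma connect_minus_inv u h : h \notin val e ->
  connect (adj_minus e) u (vl h) -> connect (adj_minus e) u (vl (iv h)).
Proof.
move=> he uh; apply: connect_trans uh (connect1 _); apply/existsP; exists h.
by rewrite he !eqxx.
Qed.

Lemma reach_edge u : exists2 h, h \in val e & connect (adj_minus e) u (vl h).
Proof.
have [h0 eh0] := edge_ofP e.
pose Q v := (exists2 h, h \in val e & connect (adj_minus e) u (vl h)) \/
            connect (adj_minus e) u v.
suff [] : Q (vl h0) by [|exists h0; rewrite // eh0 !inE eqxx].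
apply: connect_ind (connect_full u (vl h0)); first by right.
move=> y z _ [reach|uy]; first by left.
case/existsP => h /and3P [_ /eqP hy /eqP hz]; rewrite -hz.
case: (boolP (h \in val e)) => he; first by left; exists h; rewrite // hy.
by right; apply: connect_minus_inv; rewrite // hy.
Qed.

Lemma bridge_split u h : is_bridge e -> h \in val e ->
  vl h \in comp_minus e u -> vl (iv h) \notin comp_minus e u.
Proof.
move=> bridge he; rewrite /comp_minus !inE => uh; apply: contraL bridge => uh'.
apply/negPn.
have from_u v : connect (adj_minus e) u v.
  apply: (connect_ind (Q := connect (adj_minus e) u)) (connect_full u v) => // y z _ uy.
  case/existsP => h' /and3P [_ /eqP hy /eqP hz]; rewrite -hz.
  case: (boolP (h' \in val e)) => h'e; last by apply: connect_minus_inv; rewrite // hy.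
  by move: h'e; rewrite {1}(edge_of_half he) !inE => /orP [] /eqP ->; rewrite ?half_invK.
apply/forallP => x; apply/forallP => y; apply: connect_trans (from_u y).
by rewrite (sym_connect_sym adj_minus_sym).
Qed.

End Edge.

Variable R : realType.

Lemma vp_surj (b : 'I_n -> R) : exists w : edge G -> R, in_fiber b w.
Proof.
have [W EW] := vpr_double_preimage.
exists (fun e => \sum_x (b x / 2) * (W x e)%:~R) => v.
rewrite vpE vpr_sum (bigD1 v) //= big1 ?addr0 => [|x xv].
  by rewrite vpr_intr EW /evec eqxx intrM mulr1 -mulrA mulVf ?mulr1 ?pnatr_eq0.
by rewrite vpr_intr EW /evec (negbTE xv) mulr0.
Qed.

Lemma vp_kernel_basis d (f : 'I_(n + d) -> edge G) (f' : edge G -> 'I_(n + d)) :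
  cancel f f' -> cancel f' f ->
  exists u : 'I_d -> edge G -> R,
  [/\ lin_indep u,
      forall z, (forall v, vp z v = 0) <->
        exists lam, forall e, z e = \sum_i lam i * u i e
    & forall z, ((forall v, vp z v = 0) /\ integral_w z) <->
        exists m : 'I_d -> int, forall e, z e = \sum_i (m i)%:~R * u i e].
Proof.
move=> fK f'K; have [X AX] := inc_mx_rinv fK f'K.
have [U [U_free kerR kerZ]] := int_kernel_basis R AX.
have coordU (lam : 'cV[R]_d) e :
    (map_mx intr U *m lam) (f' e) 0 = \sum_i lam i 0 * (U (f' e) i)%:~R.
  by rewrite mulmx_colE; apply: eq_bigr => i _; rewrite mxE.
exists (fun i e => (U (f' e) i)%:~R); split.
- move=> lam lam0 i.
  suff /U_free/matrixP/(_ i 0) : map_mx intr U *m \col_i lam i = 0 by rewrite !mxE.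
  apply/matrixP => j c; rewrite ord1 [RHS]mxE -(lam0 (f j)) -{1}(fK j) coordU.
  by apply: eq_bigr => i' _; rewrite mxE.
- move=> z; rewrite -(inc_mx_fcol_eq0 fK f'K) -(map_inc_mx f R) kerR.
  split=> [[lam /(fcolP fK f'K) zU]|[lam zU]].
    by exists (fun i => lam i 0) => e; rewrite zU coordU.
  exists (\col_i lam i); apply/(fcolP fK f'K) => e; rewrite zU coordU.
  by apply: eq_bigr => i _; rewrite mxE.
- move=> z; split=> [[z0 /integral_wP [zz zzE]]|[m zm]].
    have /(inc_mx_fcol_eq0 fK f'K) /kerZ [lam /(fcolP fK f'K) zzU] : forall v, vpr zz v = 0.
      by move=> v; apply: (@intr_inj R); rewrite rmorph0 -vpr_intr -(z0 v); apply: eq_vpr.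
    exists (fun i => lam i 0) => e; rewrite zzE zzU mulmx_colE rmorph_sum.
    by apply: eq_bigr => i _; rewrite rmorphM.
  pose zz e := \sum_i m i * U (f' e) i.
  have zzE e : z e = (zz e)%:~R.
    by rewrite zm rmorph_sum; apply: eq_bigr => i _; rewrite rmorphM.
  split=> [v|e]; last by rewrite zzE intr_int.
  suff /(inc_mx_fcol_eq0 fK f'K) zz0 : inc_mx f int *m fcol f zz = 0.
    by rewrite vpE (eq_vpr _ zzE) vpr_intr zz0.
  apply/kerZ; exists (\col_i m i); apply/(fcolP fK f'K) => e.
  by rewrite mulmx_colE; apply: eq_bigr => i _; rewrite mxE.
Qed.

Lemma fiber_kernel_basis : exists d (u : 'I_d -> edge G -> R),
  [/\ (d + n)%N = #|edge_set G|, lin_indep u,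
      forall z, (forall v, vp z v = 0) <->
        exists lam, forall e, z e = \sum_i lam i * u i e
    & forall z, ((forall v, vp z v = 0) /\ integral_w z) <->
        exists m : 'I_d -> int, forall e, z e = \sum_i (m i)%:~R * u i e].
Proof.
have n_le := leq_vertex_edge (@enum_valK (edge G)) (@enum_rankK (edge G)).
have nd : (n + (#|{: edge G}| - n) = #|{: edge G}|)%N by rewrite subnKC.
have fK : cancel (fun j => enum_val (cast_ord nd j))
                 (fun e => cast_ord (esym nd) (enum_rank e)).
  by move=> j; rewrite enum_valK cast_ordK.
have f'K : cancel (fun e => cast_ord (esym nd) (enum_rank e))
                  (fun j => enum_val (cast_ord nd j)).
  by move=> e; rewrite cast_ordKV enum_rankK.
have [u [u_free kerR kerZ]] := vp_kernel_basis fK f'K.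
exists (#|{: edge G}| - n)%N, u; split=> //.
by rewrite subnK // card_sig; apply: eq_card.
Qed.

Definition csign (c : {ffun 'I_n -> bool}) i : R := if c i then 1 else -1.

Definition end_sign (C : {set 'I_n}) (c : {ffun 'I_n -> bool}) h : R :=
  if vl h \in C then csign c (vl h) else 0.

Lemma sum_csign (C : {set 'I_n}) (c : {ffun 'I_n -> bool}) (F : 'I_n -> R) :
  \sum_(i in C | c i) F i - \sum_(i in C | ~~ c i) F i = \sum_(i in C) csign c i * F i.
Proof.
rewrite [RHS](bigID c) /= -sumrN; congr (_ + _); apply: eq_bigr => i /andP [_].
  by rewrite /csign => ->; rewrite mul1r.
by rewrite /csign => /negbTE ->; rewrite mulN1r.
Qed.

Lemma signed_inc (C : {set 'I_n}) (c : {ffun 'I_n -> bool}) h :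
  \sum_(i in C) csign c i * (inc i (edge_of h))%:R = end_sign C c h + end_sign C c (iv h).
Proof.
have signed_pt x : \sum_(i in C) csign c i * (x == i)%:R =
    if x \in C then csign c x else 0.
  rewrite big_mkcond (bigD1 x) //= eqxx big1 ?addr0 => [|i xi].
    by case: (x \in C); rewrite ?mulr1.
  by rewrite eq_sym (negbTE xi); case: (i \in C); rewrite ?mulr0.
under eq_bigr do rewrite inc_edge_of natrD mulrDr.
by rewrite big_split /= !signed_pt.
Qed.

Lemma signed_vp (C : {set 'I_n}) (c : {ffun 'I_n -> bool}) (w : edge G -> R) :
  \sum_(i in C) csign c i * vp w i =
  \sum_e w e * \sum_(i in C) csign c i * (inc i e)%:R.
Proof.
rewrite /vp; under eq_bigr do rewrite mulr_sumr; rewrite exchange_big /=.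
by apply: eq_bigr => e _; rewrite mulr_sumr; apply: eq_bigr => i _; ring.
Qed.

Section StaticEdge.
Variables (e : edge G) (u : 'I_n) (c : {ffun 'I_n -> bool}).
Local Notation C := (comp_minus e u).

(* A proper colouring of the component C gives opposite signs to the two
   ends of every edge of G - e meeting C, and C is closed in G - e. *)
Lemma signed_inc_other e' : proper_on e C c -> e' != e ->
  \sum_(i in C) csign c i * (inc i e')%:R = 0.
Proof.
move=> proper e'e; have [h eh] := edge_ofP e'.
have he : h \notin val e by apply: contra e'e => /edge_of_half ->; rewrite eh.
rewrite eh signed_inc /end_sign.
case: (boolP (vl h \in C)) => hC; last first.
  suff /negbTE -> : vl (iv h) \notin C by rewrite addr0.
  apply: contra hC; rewrite !inE -{2}[h]half_invK.
  exact/connect_minus_inv/notin_edge_inv.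
have hC' : vl (iv h) \in C by move: hC; rewrite !inE; apply: connect_minus_inv.
rewrite hC' /csign; move/forallP/(_ h): proper; rewrite he hC /=.
by case: (c (vl h)); case: (c (vl (iv h))) => //= _; rewrite ?subrr ?addNr.
Qed.

Lemma signed_inc_self : fe_data e (u, c) ->
  \sum_(i in C) csign c i * (inc i e)%:R = if is_bridge e then 1 else 2.
Proof.
case/andP => /= proper /existsP [h /and3P [he hC ch]].
rewrite {2}(edge_of_half he) signed_inc /end_sign hC /csign ch.
have [bridge|/negbNE /forallP connected] := boolP (is_bridge e).
  by rewrite (negbTE (bridge_split bridge he hC)) addr0.
have allC v : v \in C by rewrite inE; move/forallP: (connected u); apply.
rewrite allC; case c_iv: (c (vl (iv h))) => //.
case/negP: nbip; apply/existsP; exists c; apply/forallP => h'.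
case: (boolP (h' \in val e)) => h'e.
  move: h'e; rewrite {1}(edge_of_half he) !inE => /orP [] /eqP ->.
    by rewrite ch c_iv.
  by rewrite half_invK ch c_iv.
by move/forallP/(_ h'): proper; rewrite h'e allC.
Qed.

End StaticEdge.

Lemma static_fe_data (e : edge G) : static e -> exists p, fe_data e p.
Proof.
case/andP => _ /existsP [u /existsP [c proper]].
have [h he uh] := reach_edge e u.
have hC : vl h \in comp_minus e u by rewrite inE.
case ch: (c (vl h)).
  by exists (u, c); rewrite /fe_data proper; apply/existsP; exists h; rewrite he hC ch.
exists (u, [ffun i => ~~ c i]); apply/andP; split.
  apply/forallP => h'; rewrite !ffunE; apply/implyP => h'C.
  by move/forallP/(_ h')/implyP/(_ h'C): proper; case: (c _); case: (c _).
by apply/existsP; exists h; rewrite he hC ffunE ch.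
Qed.

(* Summing the fiber equations over the bipartite component with signs
   +1 on I and -1 on J leaves only the contribution of e. *)
Lemma static_weight (e : edge G) (b : 'I_n -> R) (w : edge G -> R) :
  static e -> in_fiber b w -> w e = f_e e b.
Proof.
move=> /static_fe_data [p pe] wb; rewrite /f_e.
case: pickP => [[u c] /= ucE | /(_ p)]; last by rewrite pe.
rewrite sum_csign; under eq_bigr do rewrite -wb.
rewrite signed_vp (bigD1 e) //= [X in _ + X]big1 ?addr0 => [|e' e'e]; last first.
  by rewrite signed_inc_other ?mulr0 //; case/andP: ucE.
rewrite signed_inc_self //; case: is_bridge; first by rewrite !mul1r mulr1.
by rewrite mulrCA mulVf ?mulr1 // pnatr_eq0.
Qed.

Lemma odd_reachable_minus (e : edge G) r : ~~ static e ->
  odd_reachable vl (fun h => vl (iv h)) [pred h | h \notin val e] r.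
Proof.
rewrite /static nbip /= => /existsPn /(_ r) /existsPn no_proper c.
move: (no_proper [ffun i => c i]); rewrite negb_forall => /existsP [h].
rewrite negb_imply !ffunE negbK => /andP [/andP [he hC] /eqP ch].
by exists h => //; split; first by rewrite inE in hC.
Qed.

(* In G - e every vertex v still has 2 e_v in the edge lattice; for the two
   ends u, v of e, 2 e_u + 2 e_v minus twice the column of e is then a
   kernel vector that does not vanish at e. *)
Lemma nonstatic_kernel (e : edge G) : ~~ static e ->
  exists z : edge G -> int, (forall v, vpr z v = 0) /\ z e != 0.
Proof.
move=> nst; have span_double_minus x : vp_span [pred e' | e' != e] (fun i => 2 * evec x i).
  apply: (span_double (vp_span0 _) (@vp_spanB _) _ (odd_reachable_minus x nst)).
  by move=> h he; apply/vp_span_edge/edge_of_notin.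
have [h eh] := edge_ofP e.
have [wh wh0 whE] := span_double_minus (vl h).
have [wi wi0 wiE] := span_double_minus (vl (iv h)).
exists (fun e' => wh e' + wi e' - 2 * (e' == edge_of h)%:R); split=> [v|].
  rewrite vprB vprD vprZ vpr_edge_of whE wiE /evec natrD !natz; ring.
by rewrite -eh wh0 ?wi0 ?eqxx ?negbK.
Qed.

Lemma nonstatic_nonconstant (e : edge G) (b : 'I_n -> R) : ~~ static e ->
  exists w1 w2, [/\ in_fiber b w1, in_fiber b w2 & w1 e != w2 e].
Proof.
move=> /nonstatic_kernel [z [z0 ze]]; have [w wb] := vp_surj b.
exists w, (fun e' => w e' + (z e')%:~R); split=> // [v|].
  by rewrite vpE vprD vpr_intr z0 rmorph0 addr0; apply: wb.
by rewrite eq_sym -subr_eq0 addrC addKr intr_eq0.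
Qed.

Lemma int_fiber_point (b : 'I_n -> R) (bz : 'I_n -> int) :
  (forall v, b v = (bz v)%:~R) -> (2 %| \sum_v bz v)%Z ->
  exists2 w0 : edge G -> R, in_fiber b w0 & integral_w w0.
Proof.
move=> bE /vpr_even_surj [wz wzE].
exists (fun e => (wz e)%:~R) => [v|e]; last exact: intr_int.
by rewrite vpE vpr_intr wzE bE.
Qed.

End Connected.

End RibbonGraph.

Theorem lemma3p4 (R : realType) (g n : nat) (kappa : seq nat) (G : ribbon_graph n) :
  all odd kappa -> in_RG G kappa g -> ~~ bipartite G ->
  [/\ (* (1) surjectivity *)
      (forall b : 'I_n -> R, exists w : edge G -> R, in_fiber b w),
      (* (2) fibers are affine subspaces of dimension |E| - |V| *)
      (forall b : 'I_n -> R, exists d (w0 : edge G -> R) (u : 'I_d -> edge G -> R),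
          fiber_affine_dim b w0 u),
      (* (3) static edges have constant weight f_e(b), others are non-constant *)
      (forall (b : 'I_n -> R) (e : edge G),
          (static e -> forall w, in_fiber b w -> w e = f_e e b) /\
          (~~ static e -> exists w1 w2, [/\ in_fiber b w1, in_fiber b w2 & w1 e != w2 e]))
    & (* (4) integral points *)
      (forall b : 'I_n -> R,
         ((exists bz : 'I_n -> int,
              (forall v, b v = (bz v)%:~R) /\ (2 %| \sum_v bz v)%Z) ->
          exists d (w0 : edge G -> R) (u : 'I_d -> edge G -> R),
            fiber_affine_dim b w0 u /\
            forall w, (in_fiber b w /\ integral_w (G:=G) w) <->
              exists m : 'I_d -> int, forall e, w e = aff_param w0 u (fun k => (m k)%:~R) e) /\
         (~ (exists bz : 'I_n -> int,
              (forall v, b v = (bz v)%:~R) /\ (2 %| \sum_v bz v)%Z) ->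
          forall w, in_fiber b w -> ~ integral_w (G:=G) w))].
Proof.
move=> _ [conn _ _] nbip.
have [d [u [card u_free kerR kerZ]]] := fiber_kernel_basis conn nbip R.
have affine_dim b w0 : in_fiber b w0 -> fiber_affine_dim b w0 u.
  by move=> w0b; split=> //; apply: fiber_param.
split.
- exact: vp_surj.
- by move=> b; have [w0 w0b] := vp_surj conn nbip b; exists d, w0, u; apply: affine_dim.
- move=> b e; split; first by move=> st w; apply: static_weight.
  exact: nonstatic_nonconstant.
- move=> b; split=> [[bz [bE bz_even]]|no_bz w wb wint].
    have [w0 w0b w0int] := int_fiber_point conn nbip bE bz_even.
    by exists d, w0, u; split; [apply: affine_dim | apply: fiber_int_param].
  exact/no_bz/(int_fiber_parity wb wint).
Qed.
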